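(* Assume the balanced case $\beta_0=C$, $A>0$ and $\Delta=B^2-4AC<0$; set $p=-B/(2A)$, $q=\sqrt{-\Delta}/(2A)>0$. Then, with the principal branch $\arctan\in(-\pi/2,\pi/2)$ and as an identity of analytic functions for $t$ near $0$ (away from zeros of the cosine), \[ w(x,t)=\exp\bigl[(\alpha_0p+\gamma_0)t\bigr]\left[\frac{q}{\sqrt{(x-p)^2+q^2}\,\cos\bigl(Aqt+\arctan\frac{x-p}{q}\bigr)}\right]^{\alpha_0/A}. \]
   Context: Fix nonnegative integers $a,b,c,\alpha_0,\beta_0,\gamma_0$, $\alpha_k=ak+\alpha_0$, $\beta_k=bk+\beta_0$, $\gamma_k=ck+\gamma_0$; $w_{0,0}=1$, $w_{n,k}=0$ for $k<0$ or $k>n$, $w_{n+1,k}=\alpha_{k-1}w_{n,k-1}+\gamma_k w_{n,k}+\beta_k w_{n,k+1}$. $A=a$, $B=c$, $C=b$; balanced means $\beta_0=C$. $P_n(x)=\sum_k w_{n,k}x^k$, $w(x,t)=\sum_{n\ge0}P_n(x)t^n/n!$. *)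

From Stdlib Require Import Reals Arith Lra.
From Coquelicot Require Export Coquelicot.
Open Scope R_scope.

(* Row n of the triangle: wrow n k = w_{n,k} (k : nat, so w_{n,k}=0 for k<0 is
   built in: the k=0 case of the recurrence omits the alpha_{-1} term).
   alpha_k = a k + al, beta_k = b k + be, gamma_k = c k + ga. *)
Fixpoint wrow (a b c al be ga : nat) (n : nat) : nat -> nat :=
  match n with
  | O => fun k => if Nat.eqb k 0 then 1%nat else 0%nat
  | S m =>
      let prev := wrow a b c al be ga m in
      fun k => match k with
      | O => (ga * prev 0%nat + be * prev 1%nat)%nat
      | S j => ((a * j + al) * prev j
                + (c * S j + ga) * prev (S j)
                + (b * S j + be) * prev (S (S j)))%nat
      end
  end.

Definition Pn (a b c al be ga n : nat) (x : R) : R :=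
  sum_f_R0 (fun k => INR (wrow a b c al be ga n k) * x ^ k) n.

From Stdlib Require Import Reals Lra Lia Factorial.
From Coquelicot Require Import Coquelicot.
Open Scope R_scope.

(* With beta_0 = C the rows satisfy the differential recurrence
     P_{n+1} = (A y^2 + B y + C) P_n' + (alpha_0 y + gamma_0) P_n.
   Let phi solve phi' = A phi^2 + B phi + C with phi(0) = x, and G solve
   G' = (alpha_0 phi + gamma_0) G with G(0) = 1.  For fixed t the function
   K(s) = sum_n P_n(phi(s)) (t - s)^n / n! satisfies K' = -(alpha_0 phi + gamma_0) K,
   because the derivative of its partial sums telescopes, and K(t) = 1; hence
   K G is constant and w(x, t) = K(0) = G(t).  Completing the square,
   phi(s) = p + q tan(theta + A q s) with theta = arctan((x - p)/q), and then
   G(s) = exp((alpha_0 p + gamma_0) s) (cos theta / cos(theta + A q s))^(alpha_0/A).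
   Convergence for small t comes from the crude bound |P_n(y)| <= n! K^n on a disk. *)

Lemma sum_f_R0_vanishing_tail (u : nat -> R) n N :
  (n <= N)%nat -> (forall k, (n < k)%nat -> u k = 0) -> sum_f_R0 u N = sum_f_R0 u n.
Proof.
  intros HnN Hu; induction HnN as [|N HnN IH]; [reflexivity|].
  rewrite tech5, IH, Hu by lia; ring.
Qed.

Lemma is_derive_poly (cf : nat -> R) N y :
  is_derive (fun y => sum_f_R0 (fun k => cf k * y ^ k) N) y
            (sum_f_R0 (fun k => cf k * INR k * y ^ pred k) N).
Proof.
  induction N as [|N IH].
  - apply (is_derive_ext (fun _ => cf 0%nat)); [intros; simpl; ring|].
    replace (sum_f_R0 _ 0) with 0 by (simpl; ring).
    exact (@is_derive_const R_AbsRing R_NormedModule _ y).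
  - apply (is_derive_ext (fun y => sum_f_R0 (fun k => cf k * y ^ k) N + cf (S N) * y ^ S N));
      [intros; symmetry; apply tech5|].
    rewrite tech5; apply (is_derive_plus _ (fun y => cf (S N) * y ^ S N)); [exact IH|].
    replace (cf (S N) * INR (S N) * y ^ pred (S N))
      with (cf (S N) * (INR (S N) * 1 * y ^ pred (S N))) by ring.
    apply is_derive_scal, (is_derive_pow (fun y => y)).
    exact (@is_derive_id R_AbsRing y).
Qed.

Lemma Series_minus_sum_le_geom (u : nat -> R) (r : R) N :
  0 <= r < 1 -> (forall n, Rabs (u n) <= r ^ n) ->
  Rabs (Series u - sum_f_R0 u N) <= r ^ S N / (1 - r).
Proof.
  intros Hr Hu.
  assert (Hgeom : ex_series (fun n => r ^ n)) by (apply ex_series_geom; rewrite Rabs_right; lra).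
  assert (Htail : forall k, Rabs (u (S N + k)%nat) <= r ^ S N * r ^ k)
    by (intros k; rewrite <- pow_add; apply Hu).
  assert (Hgeom' : ex_series (fun k => r ^ S N * r ^ k))
    by exact (@ex_series_scal_l R_AbsRing R_NormedModule _ _ Hgeom).
  assert (Hex : ex_series u)
    by exact (@ex_series_le R_AbsRing R_CompleteNormedModule _ _ Hu Hgeom).
  rewrite (Series_incr_n u (S N)) by (lia || exact Hex).
  replace (_ + _ - _) with (Series (fun k => u (S N + k)%nat)) by (simpl; ring).
  eapply Rle_trans; [apply Series_Rabs|].
  - apply (@ex_series_le R_AbsRing R_CompleteNormedModule _ (fun k => r ^ S N * r ^ k));
      [|exact Hgeom'].
    intros k; rewrite Rabs_Rabsolu; apply Htail.
  - eapply Rle_trans; [apply Series_le; [|exact Hgeom']|].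
    + intros k; split; [apply Rabs_pos | apply Htail].
    + rewrite Series_scal_l, Series_geom by (rewrite Rabs_right; lra); right; field; lra.
Qed.

Lemma CVU_geom_bound (fn : nat -> R -> R) (h : R -> R) c (rho : posreal) (B : R) :
  (forall N s, Boule c rho s -> Rabs (h s - fn N s) <= B * (/2) ^ N) -> CVU fn h c rho.
Proof.
  intros Hb eps Heps.
  destruct (pow_lt_1_zero (/2) ltac:(rewrite Rabs_right; lra) (eps / (Rabs B + 1)))
    as [N HN]; [apply Rdiv_lt_0_compat; [exact Heps | pose proof (Rabs_pos B); lra]|].
  exists N; intros n s Hn Hs.
  specialize (HN n Hn); rewrite Rabs_right in HN by (apply Rle_ge, pow_le; lra).
  pose proof (Rabs_pos B); pose proof (pow_le (/2) n ltac:(lra)).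
  apply Rle_lt_trans with (Rabs B * (/2) ^ n).
  - eapply Rle_trans; [apply Hb, Hs|]. apply Rmult_le_compat_r; [lra | apply RRle_abs].
  - apply Rle_lt_trans with ((Rabs B + 1) * (/2) ^ n); [nra|].
    apply Rmult_lt_reg_r with (/ (Rabs B + 1)); [apply Rinv_0_lt_compat; lra|].
    replace ((Rabs B + 1) * (/ 2) ^ n * / (Rabs B + 1)) with ((/2) ^ n) by (field; lra).
    exact HN.
Qed.

Lemma is_derive_0_eq (h : R -> R) (d t : R) :
  (forall s, Rabs s < d -> is_derive h s 0) -> Rabs t < d -> h t = h 0.
Proof.
  intros Hh Ht.
  assert (Hd : forall a b, a < b -> (forall s, a <= s <= b -> Rabs s < d) -> h b = h a).
  { intros a b Hab Hs.
    destruct (MVT_cor2 h (fun _ => 0) a b Hab) as [s [Hmvt _]]; [|lra].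
    intros s Hs'; apply is_derive_Reals, Hh, Hs, Hs'. }
  apply Rabs_def2 in Ht.
  destruct (Rtotal_order t 0) as [Hlt | [-> | Hgt]].
  - symmetry; apply Hd; [exact Hlt|]; intros s Hs; apply Rabs_def1; lra.
  - reflexivity.
  - apply Hd; [exact Hgt|]; intros s Hs; apply Rabs_def1; lra.
Qed.

Lemma pow_quarter_le n : (INR n + 2) * (/4) ^ n <= 2 * (/2) ^ n.
Proof.
  induction n as [|n IH]; [simpl; lra|].
  rewrite S_INR; simpl pow.
  pose proof (pow_le (/4) n ltac:(lra)); pose proof (pos_INR n); nra.
Qed.

Lemma Rabs_tan_lt z m : - (PI / 2) < m < PI / 2 -> Rabs z < m -> Rabs (tan z) < tan m.
Proof.
  intros Hm Hz; apply Rabs_def2 in Hz; apply Rabs_def1.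
  - apply tan_increasing; lra.
  - rewrite <- tan_neg; apply tan_increasing; lra.
Qed.

Lemma Rabs_affine_le al ga y r : 0 <= al -> 0 <= ga -> Rabs y <= r ->
  Rabs (al * y + ga) <= al * r + ga.
Proof.
  intros Hal Hga Hy; eapply Rle_trans; [apply Rabs_triang|].
  rewrite Rabs_mult, (Rabs_right al), (Rabs_right ga) by lra.
  pose proof (Rmult_le_compat_l al _ _ Hal Hy); lra.
Qed.

Lemma quadratic_vertex_form A B C y : 0 < A -> B ^ 2 - 4 * A * C < 0 ->
  A * y ^ 2 + B * y + C
  = A * (y - - B / (2 * A)) ^ 2 + A * (sqrt (- (B ^ 2 - 4 * A * C)) / (2 * A)) ^ 2.
Proof.
  intros HA Hdisc.
  replace ((sqrt (- (B ^ 2 - 4 * A * C)) / (2 * A)) ^ 2)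
    with (sqrt (- (B ^ 2 - 4 * A * C)) * sqrt (- (B ^ 2 - 4 * A * C)) / (4 * A ^ 2))
    by (field; lra).
  rewrite sqrt_sqrt by lra; field; lra.
Qed.

Section Characteristics.

Variables (P D : nat -> R -> R) (f g phi G : R -> R) (d r K t : R).

Hypothesis P_derive : forall n y, is_derive (P n) y (D n y).
Hypothesis P_succ : forall n y, P (S n) y = f y * D n y + g y * P n y.
Hypothesis P_0 : forall y, P 0%nat y = 1.
Hypothesis P_bound : forall n y, Rabs y <= r -> Rabs (P n y) <= INR (fact n) * K ^ n.
Hypothesis g_bound : forall y, Rabs y <= r -> Rabs (g y) <= K.
Hypothesis phi_derive : forall s, Rabs s < d -> is_derive phi s (f (phi s)).
Hypothesis phi_bound : forall s, Rabs s < d -> Rabs (phi s) <= r.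
Hypothesis G_derive : forall s, Rabs s < d -> is_derive G s (g (phi s) * G s).
Hypothesis K_pos : 0 < K.
Hypothesis dK_small : 8 * d * K <= 1.
Hypothesis t_small : Rabs t < d.

Let term n s := P n (phi s) * (t - s) ^ n / INR (fact n).
Let dterm n s :=
  (f (phi s) * D n (phi s) * (t - s) ^ n - INR n * P n (phi s) * (t - s) ^ pred n) / INR (fact n).
Let Ksum s := Series (fun n => term n s).

Lemma K_dist_le s : Rabs s < d -> 0 <= K * Rabs (t - s) <= /4.
Proof.
  intros Hs; pose proof (Rabs_triang t (- s)) as Htri; rewrite Rabs_Ropp in Htri.
  split; [apply Rmult_le_pos; [lra | apply Rabs_pos]|]; unfold Rminus; nra.
Qed.

Lemma scaled_P_abs_le n s m : Rabs s < d ->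
  Rabs (P n (phi s)) * Rabs (t - s) ^ m / INR (fact n) <= K ^ n * Rabs (t - s) ^ m.
Proof.
  intros Hs; pose proof (INR_fact_lt_0 n); pose proof (pow_le (Rabs (t - s)) m (Rabs_pos _)).
  apply Rmult_le_reg_r with (INR (fact n)); [assumption|].
  replace (Rabs (P n (phi s)) * Rabs (t - s) ^ m / INR (fact n) * INR (fact n))
    with (Rabs (P n (phi s)) * Rabs (t - s) ^ m) by (field; lra).
  replace (K ^ n * Rabs (t - s) ^ m * INR (fact n))
    with (INR (fact n) * K ^ n * Rabs (t - s) ^ m) by ring.
  apply Rmult_le_compat_r; [assumption | apply P_bound, phi_bound, Hs].
Qed.

Lemma term_abs_le n s : Rabs s < d -> Rabs (term n s) <= (/4) ^ n.
Proof.
  intros Hs; unfold term.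
  rewrite Rabs_div, Rabs_mult, <- RPow_abs, (Rabs_right (INR _))
    by (apply Rgt_not_eq, INR_fact_lt_0 || apply Rle_ge, pos_INR).
  eapply Rle_trans; [apply scaled_P_abs_le, Hs|].
  rewrite <- Rpow_mult_distr; apply pow_incr, K_dist_le, Hs.
Qed.

Lemma ex_series_term s : Rabs s < d -> ex_series (fun n => term n s).
Proof.
  intros Hs; apply (@ex_series_le R_AbsRing R_CompleteNormedModule _ (fun n => (/4) ^ n)).
  - intros n; apply term_abs_le, Hs.
  - apply ex_series_geom; rewrite Rabs_right; lra.
Qed.

Lemma Ksum_minus_sum_le s N : Rabs s < d ->
  Rabs (Ksum s - sum_f_R0 (fun n => term n s) N) <= (/4) ^ N.
Proof.
  intros Hs; eapply Rle_trans.
  - apply (Series_minus_sum_le_geom _ (/4)); [lra|]; intros n; apply term_abs_le, Hs.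
  - pose proof (pow_le (/4) N ltac:(lra)); simpl; lra.
Qed.

Lemma term_derive n s : Rabs s < d -> is_derive (term n) s (dterm n s).
Proof.
  intros Hs.
  apply (is_derive_ext (fun s => / INR (fact n) * (P n (phi s) * (t - s) ^ n)));
    [intros; unfold term, Rdiv; simpl; ring|].
  replace (dterm n s)
    with (/ INR (fact n) * (f (phi s) * D n (phi s) * (t - s) ^ n
                           + P n (phi s) * (INR n * (0 - 1) * (t - s) ^ pred n)))
    by (unfold dterm, Rdiv; ring).
  apply is_derive_scal, (is_derive_mult (fun s => P n (phi s)) (fun s => (t - s) ^ n)).
  - apply (is_derive_comp (P n) phi); [apply P_derive | apply phi_derive, Hs].
  - apply (is_derive_pow (fun s => t - s)), (is_derive_minus (fun _ => t) (fun s => s)).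
    + exact (@is_derive_const R_AbsRing R_NormedModule t s).
    + exact (@is_derive_id R_AbsRing s).
  - intros; apply Rmult_comm.
Qed.

Lemma partial_sum_derive N s : Rabs s < d ->
  is_derive (fun s => sum_f_R0 (fun n => term n s) N) s (sum_f_R0 (fun n => dterm n s) N).
Proof.
  intros Hs; induction N as [|N IH]; [apply term_derive, Hs|].
  apply (is_derive_plus (fun s => sum_f_R0 (fun n => term n s) N) (term (S N)));
    [exact IH | apply term_derive, Hs].
Qed.

(* Since f D_n = P_{n+1} - g P_n, the derivative of the partial sum telescopes. *)
Lemma sum_dterm N s :
  sum_f_R0 (fun n => dterm n s) N
  = - g (phi s) * sum_f_R0 (fun n => term n s) N + P (S N) (phi s) * (t - s) ^ N / INR (fact N).
Proof.
  induction N as [|N IH].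
  - unfold dterm, term; simpl; rewrite P_succ; field.
  - rewrite !tech5, IH; unfold dterm, term; rewrite (P_succ (S N)).
    change (fact (S N)) with (S N * fact N)%nat; rewrite mult_INR, !S_INR; cbn [pred pow].
    pose proof (INR_fact_lt_0 N); pose proof (pos_INR N); field; lra.
Qed.

Lemma remainder_abs_le N s : Rabs s < d ->
  Rabs (P (S N) (phi s) * (t - s) ^ N / INR (fact N)) <= (INR N + 1) * K * (/4) ^ N.
Proof.
  intros Hs; pose proof (INR_fact_lt_0 N).
  rewrite Rabs_div, Rabs_mult, <- RPow_abs, (Rabs_right (INR _))
    by (apply Rgt_not_eq, INR_fact_lt_0 || apply Rle_ge, pos_INR).
  replace (Rabs (P (S N) (phi s)) * Rabs (t - s) ^ N / INR (fact N))
    with ((INR N + 1) * (Rabs (P (S N) (phi s)) * Rabs (t - s) ^ N / INR (fact (S N))))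
    by (change (fact (S N)) with (S N * fact N)%nat; rewrite mult_INR, S_INR;
        field; pose proof (pos_INR N); lra).
  pose proof (pos_INR N); rewrite Rmult_assoc; apply Rmult_le_compat_l; [lra|].
  eapply Rle_trans; [apply scaled_P_abs_le, Hs|].
  rewrite <- tech_pow_Rmult, Rmult_assoc, <- Rpow_mult_distr.
  apply Rmult_le_compat_l; [lra | apply pow_incr, K_dist_le, Hs].
Qed.

Lemma partial_sum_dterm_CVU (rho : posreal) : rho = d :> R ->
  CVU (fun N s => sum_f_R0 (fun n => dterm n s) N) (fun s => - g (phi s) * Ksum s) 0 rho.
Proof.
  intros Hrho; apply (CVU_geom_bound _ _ _ _ (2 * K)); intros N s Hs.
  unfold Boule in Hs; rewrite Rminus_0_r, Hrho in Hs.
  rewrite sum_dterm.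
  replace (_ - _) with (- g (phi s) * (Ksum s - sum_f_R0 (fun n => term n s) N)
                        - P (S N) (phi s) * (t - s) ^ N / INR (fact N)) by ring.
  eapply Rle_trans; [apply Rabs_triang|]; rewrite Rabs_Ropp, Rabs_mult, Rabs_Ropp.
  pose proof (remainder_abs_le N s Hs); pose proof (pow_quarter_le N).
  assert (Rabs (g (phi s)) * Rabs (Ksum s - sum_f_R0 (fun n => term n s) N) <= K * (/4) ^ N)
    by (apply Rmult_le_compat; [apply Rabs_pos | apply Rabs_pos
        | apply g_bound, phi_bound, Hs | apply Ksum_minus_sum_le, Hs]).
  nra.
Qed.

Lemma Ksum_derive s : Rabs s < d -> is_derive Ksum s (- g (phi s) * Ksum s).
Proof.
  intros Hs; set (rho := mkposreal d (Rle_lt_trans _ _ _ (Rabs_pos t) t_small)).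
  assert (Hball : forall s, Boule 0 rho s <-> Rabs s < d)
    by (intros; unfold Boule; rewrite Rminus_0_r; reflexivity).
  apply is_derive_Reals.
  apply (CVU_derivable (fun N s => sum_f_R0 (fun n => term n s) N)
                       (fun N s => sum_f_R0 (fun n => dterm n s) N)
                       Ksum (fun s => - g (phi s) * Ksum s) 0 rho).
  - apply partial_sum_dterm_CVU; reflexivity.
  - intros y Hy; apply is_series_Reals, Series_correct, ex_series_term, Hball, Hy.
  - intros N y Hy; apply is_derive_Reals, partial_sum_derive, Hball, Hy.
  - apply Hball, Hs.
Qed.

Lemma Ksum_at_t : Ksum t = 1.
Proof.
  apply is_series_unique, is_series_Reals; intros eps Heps; exists 0%nat; intros N _.
  replace (sum_f_R0 (fun n => term n t) N) with 1;
    [unfold Rdist; rewrite Rminus_diag, Rabs_R0; exact Heps|].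
  induction N as [|N IH].
  - unfold term; simpl; rewrite P_0; field.
  - rewrite tech5, <- IH; unfold term; rewrite Rminus_diag, pow_ne_zero by lia; field.
    apply Rgt_not_eq, INR_fact_lt_0.
Qed.

Lemma is_series_along_characteristic : G 0 = 1 ->
  is_series (fun n => P n (phi 0) * t ^ n / INR (fact n)) (G t).
Proof.
  intros G_0.
  assert (Hconst : Ksum t * G t = Ksum 0 * G 0).
  { apply (is_derive_0_eq (fun s => Ksum s * G s) d t); [|exact t_small].
    intros s Hs; replace 0 with (- g (phi s) * Ksum s * G s + Ksum s * (g (phi s) * G s)) by ring.
    apply (is_derive_mult Ksum G);
      [apply Ksum_derive, Hs | apply G_derive, Hs | intros; apply Rmult_comm]. }
  rewrite Ksum_at_t, G_0, Rmult_1_l, Rmult_1_r in Hconst; rewrite Hconst.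
  apply (is_series_ext (fun n => term n 0));
    [intros n; unfold term; rewrite Rminus_0_r; reflexivity|].
  apply Series_correct, ex_series_term; rewrite Rabs_R0.
  apply (Rle_lt_trans _ _ _ (Rabs_pos t) t_small).
Qed.

End Characteristics.

Lemma wrow_above_degree a b c al be ga n k :
  (n < k)%nat -> wrow a b c al be ga n k = 0%nat.
Proof.
  revert k; induction n as [|n IH]; intros [|k] Hk; simpl; try lia; try reflexivity.
  rewrite !IH by lia; lia.
Qed.

Definition dPn (a b c al be ga n : nat) (y : R) : R :=
  sum_f_R0 (fun k => INR (wrow a b c al be ga n k) * INR k * y ^ pred k) n.

Lemma Pn_derive a b c al be ga n y :
  is_derive (Pn a b c al be ga n) y (dPn a b c al be ga n y).
Proof. apply is_derive_poly. Qed.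

Lemma Pn_0 a b c al be ga y : Pn a b c al be ga 0 y = 1.
Proof. unfold Pn; simpl; ring. Qed.

(* With beta_0 = b we get beta_k = b (k + 1), so the beta-terms assemble into b P_n'. *)
Lemma Pn_succ a b c al ga n y :
  Pn a b c al b ga (S n) y =
  (INR a * y ^ 2 + INR c * y + INR b) * dPn a b c al b ga n y
  + (INR al * y + INR ga) * Pn a b c al b ga n y.
Proof.
  set (w := fun k => INR (wrow a b c al b ga n k)).
  assert (Hw : forall k, (n < k)%nat -> w k = 0).
  { intros k Hk; unfold w; rewrite wrow_above_degree by exact Hk; reflexivity. }
  set (up := fun k => match k with O => 0 | S j => (INR a * INR j + INR al) * w j end).
  set (diag := fun k => (INR c * INR k + INR ga) * w k).
  set (down := fun k => INR b * INR (S k) * w (S k)).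
  assert (Hsplit : forall k, INR (wrow a b c al b ga (S n) k) = up k + diag k + down k).
  { intros [|j]; unfold up, diag, down, w; simpl wrow;
      repeat rewrite ?plus_INR, ?mult_INR, ?S_INR; simpl INR; ring. }
  assert (Hup : sum_f_R0 (fun k => up k * y ^ k) (S n)
                = sum_f_R0 (fun k => (INR a * INR k + INR al) * w k * y ^ S k) n).
  { rewrite decomp_sum by lia; simpl pred; unfold up at 1; ring_simplify.
    apply sum_eq; intros; reflexivity. }
  assert (Hdiag : sum_f_R0 (fun k => diag k * y ^ k) (S n) = sum_f_R0 (fun k => diag k * y ^ k) n).
  { rewrite tech5; unfold diag at 2; rewrite Hw by lia; ring. }
  assert (Hdown : sum_f_R0 (fun k => down k * y ^ k) (S n)
                  = sum_f_R0 (fun k => INR b * INR k * w k * y ^ pred k) n).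
  { rewrite <- (sum_f_R0_vanishing_tail _ n (S (S n)))
      by (lia || (intros; rewrite Hw by lia; ring)).
    rewrite (decomp_sum _ (S (S n))) by lia; simpl pred; simpl INR; ring_simplify.
    apply sum_eq; intros; reflexivity. }
  unfold Pn at 1; rewrite (sum_eq _ (fun k => up k * y ^ k + diag k * y ^ k + down k * y ^ k))
    by (intros; rewrite Hsplit; ring).
  rewrite !sum_plus, Hup, Hdiag, Hdown; unfold dPn, Pn.
  rewrite !scal_sum, <- !sum_plus; apply sum_eq; intros [|k] _; unfold diag, w.
  - simpl; ring.
  - rewrite S_INR; simpl pred; simpl pow; ring.
Qed.

Lemma Pn_nonneg a b c al be ga n r : 0 <= r -> 0 <= Pn a b c al be ga n r.
Proof.
  intros Hr; apply cond_pos_sum; intros k.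
  apply Rmult_le_pos; [apply pos_INR | apply pow_le; exact Hr].
Qed.

Lemma Pn_abs_le a b c al be ga n y r :
  Rabs y <= r -> Rabs (Pn a b c al be ga n y) <= Pn a b c al be ga n r.
Proof.
  intros Hy; eapply Rle_trans; [apply sum_f_R0_triangle|].
  apply sum_Rle; intros k _.
  rewrite Rabs_mult, Rabs_right, <- RPow_abs by (apply Rle_ge, pos_INR).
  apply Rmult_le_compat_l; [apply pos_INR|].
  apply pow_incr; split; [apply Rabs_pos | exact Hy].
Qed.

Lemma dPn_le a b c al be ga n r :
  1 <= r -> dPn a b c al be ga n r <= INR n * Pn a b c al be ga n r.
Proof.
  intros Hr; unfold dPn, Pn; rewrite scal_sum; apply sum_Rle; intros k Hk.
  pose proof (pos_INR (wrow a b c al be ga n k)) as Hw.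
  assert (Hkn : INR k <= INR n) by (apply le_INR; exact Hk).
  assert (Hpow : r ^ pred k <= r ^ k).
  { destruct k as [|k]; simpl; [lra|]. pose proof (pow_le r k ltac:(lra)); nra. }
  pose proof (pow_le r (pred k) ltac:(lra)); pose proof (pos_INR k).
  assert (INR k * r ^ pred k <= INR n * r ^ k) by (apply Rmult_le_compat; lra).
  nra.
Qed.

Lemma Pn_le_fact a b c al ga n r : 1 <= r ->
  Pn a b c al b ga n r <=
  INR (fact n) * ((INR a * r ^ 2 + INR c * r + INR b) + (INR al * r + INR ga)) ^ n.
Proof.
  intros Hr.
  set (f := INR a * r ^ 2 + INR c * r + INR b); set (g := INR al * r + INR ga).
  assert (Hf : 0 <= f).
  { unfold f; pose proof (pow_le r 2 ltac:(lra)).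
    pose proof (pos_INR a); pose proof (pos_INR b); pose proof (pos_INR c); nra. }
  assert (Hg : 0 <= g) by (unfold g; pose proof (pos_INR al); pose proof (pos_INR ga); nra).
  induction n as [|n IH]; [rewrite Pn_0; simpl; lra|].
  rewrite Pn_succ; fold f g.
  set (M := INR (fact n) * (f + g) ^ n) in IH.
  replace (INR (fact (S n)) * (f + g) ^ S n) with ((INR n + 1) * (f + g) * M)
    by (unfold M; change (fact (S n)) with (S n * fact n)%nat;
        rewrite mult_INR, S_INR; simpl; ring).
  pose proof (dPn_le a b c al b ga n r Hr); pose proof (Pn_nonneg a b c al b ga n r ltac:(lra)).
  pose proof (pos_INR n).
  assert (f * dPn a b c al b ga n r <= f * (INR n * M)).
  { apply Rmult_le_compat_l; [exact Hf|]. apply Rle_trans with (INR n * Pn a b c al b ga n r);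
      [assumption | apply Rmult_le_compat_l; assumption]. }
  assert (g * Pn a b c al b ga n r <= g * M) by (apply Rmult_le_compat_l; assumption).
  assert (0 <= M) by (apply Rle_trans with (Pn a b c al b ga n r); assumption).
  assert (0 <= INR n * g * M) by (apply Rmult_le_pos; [apply Rmult_le_pos|]; assumption).
  assert (0 <= f * M) by (apply Rmult_le_pos; assumption).
  nra.
Qed.

Definition tan_flow (A p q th s : R) : R := p + q * tan (th + A * q * s).

(* Equal to exp((al p + ga) s) (cos th / cos (th + A q s))^(al/A) where the cosines are positive. *)
Definition tan_weight (A p q th al ga s : R) : R :=
  exp ((al * p + ga) * s + al / A * (ln (cos th) - ln (cos (th + A * q * s)))).

Lemma tan_flow_derive A p q th s : cos (th + A * q * s) <> 0 ->
  is_derive (tan_flow A p q th) s (A * (tan_flow A p q th s - p) ^ 2 + A * q ^ 2).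
Proof.
  intros Hc; unfold tan_flow, tan; auto_derive; [exact Hc|].
  field; exact Hc.
Qed.

Lemma tan_weight_derive A p q th al ga s :
  A <> 0 -> 0 < cos (th + A * q * s) ->
  is_derive (tan_weight A p q th al ga) s
    ((al * tan_flow A p q th s + ga) * tan_weight A p q th al ga s).
Proof.
  intros HA Hc; unfold tan_weight, tan_flow, tan; auto_derive; [exact Hc|].
  unfold Rminus; field; split; [apply Rgt_not_eq, Hc | exact HA].
Qed.

Lemma tan_weight_0 A p q th al ga : tan_weight A p q th al ga 0 = 1.
Proof.
  unfold tan_weight; rewrite !Rmult_0_r, Rplus_0_r, Rminus_diag, Rmult_0_r, Rplus_0_r.
  apply exp_0.
Qed.

Lemma tan_flow_locally_bounded A p q th :
  0 < A * q -> - PI / 2 < th < PI / 2 ->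
  exists d0 r, 0 < d0 /\ forall s, Rabs s < d0 ->
    0 < cos (th + A * q * s) /\ Rabs (tan_flow A p q th s) <= r.
Proof.
  intros HAq Hth.
  set (m := (PI / 2 - Rabs th) / 2).
  assert (Hm : 0 < m) by (unfold m; assert (Rabs th < PI / 2) by (apply Rabs_def1; lra); lra).
  exists (m / (A * q)), (Rabs p + Rabs q * tan (PI / 2 - m)); split; [apply Rdiv_lt_0_compat; lra|].
  intros s Hs.
  assert (Hz : Rabs (th + A * q * s) < PI / 2 - m).
  { eapply Rle_lt_trans; [apply Rabs_triang|].
    rewrite Rabs_mult, (Rabs_right (A * q)) by lra.
    assert (A * q * Rabs s < m).
    { apply (Rmult_lt_compat_l (A * q)) in Hs; [|lra].
      replace (A * q * (m / (A * q))) with m in Hs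
        by (field; split; intros Hz; rewrite Hz in HAq; lra).
      exact Hs. }
    unfold m in *; lra. }
  split.
  - apply Rabs_def2 in Hz; apply cos_gt_0; lra.
  - unfold tan_flow; eapply Rle_trans; [apply Rabs_triang|]; rewrite Rabs_mult.
    apply Rplus_le_compat_l, Rmult_le_compat_l; [apply Rabs_pos|].
    apply Rlt_le, Rabs_tan_lt; [|exact Hz].
    unfold m in *; pose proof (Rabs_pos th); pose proof PI_RGT_0; lra.
Qed.

Lemma tan_flow_atan A p q x : 0 < q -> tan_flow A p q (atan ((x - p) / q)) 0 = x.
Proof. intros Hq; unfold tan_flow; rewrite Rmult_0_r, Rplus_0_r, tan_atan; field; lra. Qed.

Lemma tan_weight_atan A p q x al ga t : 0 < q ->
  0 < cos (atan ((x - p) / q) + A * q * t) ->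
  tan_weight A p q (atan ((x - p) / q)) al ga t
  = exp ((al * p + ga) * t) *
    Rpower (q / (sqrt ((x - p) ^ 2 + q ^ 2) * cos (A * q * t + atan ((x - p) / q)))) (al / A).
Proof.
  intros Hq Hc; set (u := (x - p) / q).
  assert (Hs : 0 < sqrt (1 + u²)) by (apply sqrt_lt_R0; pose proof (Rle_0_sqr u); lra).
  assert (Hnorm : sqrt ((x - p) ^ 2 + q ^ 2) = q * sqrt (1 + u²)).
  { replace ((x - p) ^ 2 + q ^ 2) with (q ^ 2 * (1 + u²)) by (unfold u, Rsqr; field; lra).
    rewrite sqrt_mult_alt, sqrt_pow2 by (apply pow_le || idtac; lra); reflexivity. }
  assert (Hcos0 : cos (atan u) = 1 / sqrt (1 + u²)) by apply cos_atan.
  assert (Hc0 : 0 < cos (atan u)) by (rewrite Hcos0; apply Rdiv_lt_0_compat; lra).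
  replace (q / (sqrt ((x - p) ^ 2 + q ^ 2) * cos (A * q * t + atan u)))
    with (cos (atan u) / cos (atan u + A * q * t))
    by (rewrite Hnorm, Hcos0, (Rplus_comm (A * q * t));
        field; repeat split; apply Rgt_not_eq; assumption).
  unfold tan_weight, Rpower; rewrite <- exp_plus, ln_div by assumption; f_equal; ring.
Qed.

Lemma Pn_egf_along_tan_flow (a b c al ga : nat) (p q th : R) :
  (0 < a)%nat -> 0 < q -> - PI / 2 < th < PI / 2 ->
  (forall y, INR a * y ^ 2 + INR c * y + INR b = INR a * (y - p) ^ 2 + INR a * q ^ 2) ->
  exists d, 0 < d /\ forall t, Rabs t < d ->
    0 < cos (th + INR a * q * t) /\
    is_series (fun n => Pn a b c al b ga n (tan_flow (INR a) p q th 0) * t ^ n / INR (fact n))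
      (tan_weight (INR a) p q th (INR al) (INR ga) t).
Proof.
  intros Ha Hq Hth Hvertex.
  assert (HA : 1 <= INR a) by (apply (le_INR 1); exact Ha).
  destruct (tan_flow_locally_bounded (INR a) p q th ltac:(nra) Hth) as [d0 [r0 [Hd0 Hflow]]].
  set (r := Rmax 1 r0).
  set (K := (INR a * r ^ 2 + INR c * r + INR b) + (INR al * r + INR ga)).
  assert (Hr : 1 <= r) by apply Rmax_l.
  assert (HK : 1 <= K).
  { unfold K; pose proof (pos_INR b); pose proof (pos_INR c); pose proof (pos_INR al);
      pose proof (pos_INR ga); assert (1 <= r ^ 2) by (simpl; nra); nra. }
  set (d := Rmin d0 (/ (8 * K))).
  assert (Hdd0 : forall s, Rabs s < d -> Rabs s < d0)
    by (intros s Hs; eapply Rlt_le_trans; [exact Hs | apply Rmin_l]).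
  exists d; split; [apply Rmin_pos; [exact Hd0 | apply Rinv_0_lt_compat; lra]|].
  intros t Ht; split; [apply Hflow, Hdd0, Ht|].
  apply (is_series_along_characteristic (Pn a b c al b ga) (dPn a b c al b ga)
           (fun y => INR a * y ^ 2 + INR c * y + INR b) (fun y => INR al * y + INR ga)
           (tan_flow (INR a) p q th) _ d r K).
  - intros; apply Pn_derive.
  - intros; apply Pn_succ.
  - intros; apply Pn_0.
  - intros n y Hy; eapply Rle_trans; [apply Pn_abs_le, Hy | apply Pn_le_fact, Hr].
  - intros y Hy; eapply Rle_trans; [apply Rabs_affine_le; [apply pos_INR.. | exact Hy]|].
    unfold K; pose proof (pos_INR b); pose proof (pos_INR c); nra.
  - intros s Hs; cbv beta; rewrite Hvertex.
    apply tan_flow_derive, Rgt_not_eq, Hflow, Hdd0, Hs.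
  - intros s Hs; eapply Rle_trans; [apply Hflow, Hdd0, Hs | apply Rmax_r].
  - intros s Hs; apply tan_weight_derive; [lra | apply Hflow, Hdd0, Hs].
  - lra.
  - assert (d <= / (8 * K)) by apply Rmin_r.
    apply Rmult_le_compat_l with (r := 8 * K) in H; [|lra].
    rewrite Rinv_r in H by lra; lra.
  - exact Ht.
  - apply tan_weight_0.
Qed.

Theorem mainTheorem9 (a b c al be ga : nat) :
  be = b ->
  (0 < a)%nat ->
  INR c ^ 2 - 4 * INR a * INR b < 0 ->
  let A := INR a in
  let B := INR c in
  let C := INR b in
  let p := - B / (2 * A) in
  let q := sqrt (- (B ^ 2 - 4 * A * C)) / (2 * A) in
  forall x : R,
  exists delta : R, 0 < delta /\
    forall t : R, Rabs t < delta ->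
      is_series (fun n => Pn a b c al be ga n x * t ^ n / INR (Factorial.fact n))
        (exp ((INR al * p + INR ga) * t) *
         Rpower (q / (sqrt ((x - p) ^ 2 + q ^ 2) * cos (A * q * t + atan ((x - p) / q))))
                (INR al / A)).
Proof.
  intros Hbe Ha Hdisc A B C p q x; subst be.
  assert (HA : 0 < A) by (apply lt_0_INR, Ha).
  assert (Hq : 0 < q) by (apply Rdiv_lt_0_compat; [apply sqrt_lt_R0 | ]; unfold A, B, C in *; lra).
  destruct (Pn_egf_along_tan_flow a b c al ga p q (atan ((x - p) / q)) Ha Hq (atan_bound _)
              (fun y => quadratic_vertex_form A B C y HA Hdisc)) as [d [Hd Hseries]].
  exists d; split; [exact Hd|]; intros t Ht.
  destruct (Hseries t Ht) as [Hcos Ht_series].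
  rewrite tan_flow_atan in Ht_series by exact Hq.
  rewrite <- tan_weight_atan by assumption; exact Ht_series.
Qed.
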